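(* Let $\mathcal B\subset\mathbb N_{\geq2}$ be finite with $2\in\mathcal B$, let $t\in\mathcal B\setminus\{2\}$, let $p\geq2$ be an integer, and let $W\subset\mathcal B^{p}$ be a non-empty finite set of words of length $p$ none of whose last letter equals $2$. Let $(m(i))_{i\geq0}$ be positive integers and put $M_k=p\sum_{i=0}^k m(i)$; assume $M_k\geq\max\{\sum_{i=0}^{k-1}M_i,\ M_{k-1}/2\}$ for all $k\geq1$. Let $\lambda>0$, put $L=\max\{\max\mathcal B-2,\ p\}$, and let $\alpha\in(2,\infty)$ satisfy \[2(\alpha-2)\log\big(\sqrt2(L+1)\big)+(\alpha-2)\lambda\leq\frac{\lambda}{2}.\] Let $y\in(0,1)\setminus\mathbb Q$ be such that its BCF digit sequence $(b_n(y))_{n\geq1}$ is an infinite concatenation of words from $W$. Let $x(y)\in(0,1)\setminus\mathbb Q$ be the number whose BCF digit sequence is obtained from $(b_n(y))_{n\geq1}$ by inserting, for every $k\geq0$, immediately after the digit $b_{M_k}(y)$, a block consisting of $\lfloor\exp(\lambda M_k)\rfloor$ copies of $2$ followed by a single digit $t$ (with all other digits of $y$ kept in order). Then $x(y)\in G(\alpha)\cap F_{\mathcal B}$.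
   Context: For $x\in\mathbb R$, the irrationality exponent $\mu(x)$ is the supremum of the set of $\mu\in\mathbb R$ such that $|x-p/q|<q^{-\mu}$ holds for infinitely many $(p,q)\in\mathbb Z\times\mathbb N$ with $|p|$ and $q$ coprime. For $\alpha>2$, $G(\alpha)=\{x\in\mathbb R\setminus\mathbb Q:\mu(x)\geq\alpha\}$. Every irrational $x$ has a unique backward continued fraction (BCF) expansion $x=b_0(x)-\cfrac{1}{b_1(x)-\cfrac{1}{b_2(x)-\cdots}}$ with $b_0(x)=\lfloor x\rfloor+1$ and integers $b_n(x)\geq2$ for $n\geq1$; conversely every sequence of integers $\geq2$ is the BCF digit sequence of a unique number in $(0,1)\setminus\mathbb Q$ (with $b_0=1$). For a finite $\mathcal B\subset\mathbb N_{\geq2}$, $F_{\mathcal B}=\{x\in(0,1)\setminus\mathbb Q: b_n(x)\in\mathcal B\text{ for all }n\geq1\}$. *)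

From Stdlib Require Import Reals ZArith List.
From Coquelicot Require Import Coquelicot.
Open Scope R_scope.

Definition is_rational (x : R) : Prop :=
  exists (a b : Z), b <> 0%Z /\ x = IZR a / IZR b.

(** Backward continued fraction: remainders r_0 = x,
    r_{n+1} = 1 / (b_n - r_n), digits b_n = floor(r_n) + 1.
    ([up r] is the unique integer with r < up r <= r + 1, i.e. floor r + 1.) *)
Fixpoint bcf_rem (n : nat) (x : R) : R :=
  match n with
  | O => x
  | S k => 1 / (IZR (up (bcf_rem k x)) - bcf_rem k x)
  end.

Definition bcf_digit (n : nat) (x : R) : Z := up (bcf_rem n x).

Definition good_pair (x mu : R) (pq : Z * Z) : Prop :=
  (1 <= snd pq)%Z /\ Z.gcd (fst pq) (snd pq) = 1%Z /\
  Rabs (x - IZR (fst pq) / IZR (snd pq)) < Rpower (IZR (snd pq)) (- mu).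

(* "infinitely many": not contained in any finite list *)
Definition approx_exponents (x : R) (mu : R) : Prop :=
  forall l : list (Z * Z), exists pq, good_pair x mu pq /\ ~ In pq l.

Definition irrationality_exponent (x : R) : Rbar := Lub_Rbar (approx_exponents x).

Definition G_set (alpha : R) (x : R) : Prop :=
  ~ is_rational x /\ Rbar_le (Finite alpha) (irrationality_exponent x).

Definition F_set (B : list Z) (x : R) : Prop :=
  0 < x < 1 /\ ~ is_rational x /\ forall n, (1 <= n)%nat -> In (bcf_digit n x) B.

Fixpoint nsum (k : nat) (f : nat -> nat) : nat :=
  match k with O => O | S j => (nsum j f + f j)%nat end.

Definition Mseq (p : nat) (m : nat -> nat) (k : nat) : nat :=
  (p * nsum (S k) m)%nat.

(** M_{k-1}, with the convention M_{-1} = 0 *)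
Definition Mprev (M : nat -> nat) (k : nat) : nat :=
  match k with O => O | S j => M j end.

Definition Nins (lambda : R) (M : nat -> nat) (k : nat) : nat :=
  Z.to_nat (Int_part (exp (lambda * INR (M k)))).

(** The BCF digit sequence of x is obtained from that of y by inserting,
    immediately after b_{M_k}(y), N_k copies of 2 followed by t, for every k. *)
Definition Soff (N : nat -> nat) (k : nat) : nat := nsum k (fun i => (N i + 1)%nat).

Definition is_insertion (M N : nat -> nat) (t : Z) (y x : R) : Prop :=
  (forall k n, (Mprev M k < n <= M k)%nat ->
      bcf_digit (n + Soff N k) x = bcf_digit n y) /\
  (forall k j, (1 <= j <= N k)%nat ->
      bcf_digit (M k + Soff N k + j) x = 2%Z) /\
  (forall k, bcf_digit (M k + Soff N k + N k + 1) x = t).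

Definition zlist_max (B : list Z) : Z := fold_right Z.max 0%Z B.

From Stdlib Require Import Reals ZArith List Lia Lra Znumtheory.
From Coquelicot Require Import Coquelicot.
Open Scope R_scope.

(** With convergent denominators [q_n] of the backward continued fraction, the
    fraction [(p_n - p_{n-1}) / (q_n - q_{n-1})] approximates [x] to within
    [(r_n - 1) / (q_n - q_{n-1})^2], where [r_n] is the [n]-th remainder.  Right
    before the [k]-th inserted block, a run of [N_k = floor (exp (lambda M_k))]
    digits 2 followed by [t >= 3] forces [N_k (r_n - 1) < 1].  The quantity
    [2 q_n - q_{n-1}] grows by a factor at most [max(2, 2 max B - 3)] per digit and
    only linearly along a run of 2s, so [ln (q_n - q_{n-1})] is at most about
    [M_k (2 ln (sqrt 2 (L + 1)) + lambda)]; the hypothesis on [alpha] then gives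
    [N_k >= (q_n - q_{n-1})^(alpha - 2)].  Since every digit [t >= 3] increases
    [q_n - q_{n-1}], these denominators are unbounded, so the approximations are
    infinitely many.  The digits of [x] lie in [B] because those of [y], 2 and [t] do. *)

Lemma bcf_rem_S x n : bcf_rem (S n) x = 1 / (IZR (bcf_digit n x) - bcf_rem n x).
Proof. reflexivity. Qed.

Lemma bcf_digit_sub_rem x n : 0 < IZR (bcf_digit n x) - bcf_rem n x <= 1.
Proof. unfold bcf_digit. destruct (archimed (bcf_rem n x)). lra. Qed.

Lemma bcf_rem_S_ge1 x n : 1 <= bcf_rem (S n) x.
Proof.
  rewrite bcf_rem_S. destruct (bcf_digit_sub_rem x n) as [h1 h2].
  apply (Rmult_le_reg_r (IZR (bcf_digit n x) - bcf_rem n x)); auto.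
  field_simplify; lra.
Qed.

Lemma bcf_rem_eq x n : bcf_rem n x = IZR (bcf_digit n x) - 1 / bcf_rem (S n) x.
Proof. rewrite bcf_rem_S. destruct (bcf_digit_sub_rem x n). field. lra. Qed.

Definition bcf_digits (x : R) (n : nat) : Z := bcf_digit n x.

Open Scope Z_scope.

Fixpoint bcf_pair (b : nat -> Z) (u0 u1 : Z) (n : nat) : Z * Z :=
  match n with
  | O => (u0, u1)
  | S k => let (u, u') := bcf_pair b u0 u1 k in (b k * u - u', u)
  end.

Definition bcf_num b n := fst (bcf_pair b 1 0 n).
Definition bcf_num_prev b n := snd (bcf_pair b 1 0 n).
Definition bcf_den b n := fst (bcf_pair b 0 (-1) n).
Definition bcf_den_prev b n := snd (bcf_pair b 0 (-1) n).

Lemma bcf_pair_S b u0 u1 n :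
  bcf_pair b u0 u1 (S n) =
  (b n * fst (bcf_pair b u0 u1 n) - snd (bcf_pair b u0 u1 n), fst (bcf_pair b u0 u1 n)).
Proof. simpl. now destruct (bcf_pair b u0 u1 n). Qed.

Lemma bcf_num_S b n : bcf_num b (S n) = b n * bcf_num b n - bcf_num_prev b n.
Proof. unfold bcf_num, bcf_num_prev. now rewrite bcf_pair_S. Qed.

Lemma bcf_num_prev_S b n : bcf_num_prev b (S n) = bcf_num b n.
Proof. unfold bcf_num, bcf_num_prev. now rewrite bcf_pair_S. Qed.

Lemma bcf_den_S b n : bcf_den b (S n) = b n * bcf_den b n - bcf_den_prev b n.
Proof. unfold bcf_den, bcf_den_prev. now rewrite bcf_pair_S. Qed.

Lemma bcf_den_prev_S b n : bcf_den_prev b (S n) = bcf_den b n.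
Proof. unfold bcf_den, bcf_den_prev. now rewrite bcf_pair_S. Qed.

Lemma bcf_num_den_det b n : bcf_num b n * bcf_den_prev b n - bcf_num_prev b n * bcf_den b n = -1.
Proof.
  induction n as [|n IH]; [reflexivity|].
  rewrite bcf_num_S, bcf_num_prev_S, bcf_den_S, bcf_den_prev_S. rewrite <- IH. ring.
Qed.

Open Scope R_scope.

Lemma bcf_mobius x n :
  let b := bcf_digits x in
  IZR (bcf_den b n) * bcf_rem n x - IZR (bcf_den_prev b n) <> 0 /\
  x = (IZR (bcf_num b n) * bcf_rem n x - IZR (bcf_num_prev b n)) /
      (IZR (bcf_den b n) * bcf_rem n x - IZR (bcf_den_prev b n)).
Proof.
  intro b. induction n as [|n [IH1 IH2]].
  - cbn. split; [lra | field].
  - rewrite bcf_num_S, bcf_num_prev_S, bcf_den_S, bcf_den_prev_S, !minus_IZR, !mult_IZR.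
    pose proof (bcf_rem_S_ge1 x n) as hr. pose proof (bcf_rem_eq x n) as he.
    change (bcf_digit n x) with (b n) in he.
    set (r' := bcf_rem (S n) x) in *. set (r := bcf_rem n x) in *.
    set (q := IZR (bcf_den b n)) in *. set (q' := IZR (bcf_den_prev b n)) in *.
    set (p := IZR (bcf_num b n)) in *. set (p' := IZR (bcf_num_prev b n)) in *.
    assert (eq : q * r - q' = ((IZR (b n) * q - q') * r' - q) / r')
      by (rewrite he; field; lra).
    assert (ep : p * r - p' = ((IZR (b n) * p - p') * r' - p) / r')
      by (rewrite he; field; lra).
    assert (hD : (IZR (b n) * q - q') * r' - q <> 0).
    { intro h. apply IH1. rewrite eq, h. field. lra. }
    split; [exact hD|]. rewrite IH2, eq, ep. field. split; [exact hD | lra].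
Qed.

Open Scope Z_scope.

Definition bcf_gap b n := bcf_den b n - bcf_den_prev b n.

(* The majorant of [bcf_gap] that grows by a bounded factor per digit and only
   linearly along a run of 2s. *)
Definition bcf_mass b n := bcf_den b n + bcf_gap b n.

Lemma bcf_gap_S b n : bcf_gap b (S n) = (b n - 2) * bcf_den b n + bcf_gap b n.
Proof. unfold bcf_gap. rewrite bcf_den_S, bcf_den_prev_S. ring. Qed.

Lemma bcf_gap_1 b : bcf_gap b 1 = 1.
Proof. unfold bcf_gap, bcf_den, bcf_den_prev. cbn. ring. Qed.

Lemma bcf_mass_1 b : bcf_mass b 1 = 2.
Proof. unfold bcf_mass. rewrite bcf_gap_1. unfold bcf_den. cbn. ring. Qed.

Section DenominatorGrowth.

Variable b : nat -> Z.
Hypothesis b_ge2 : forall k, (1 <= k)%nat -> 2 <= b k.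

Lemma bcf_den_gap_pos n : (1 <= n)%nat -> 1 <= bcf_den b n /\ 1 <= bcf_gap b n.
Proof.
  induction n as [|[|n] IH]; intro hn; [lia | rewrite bcf_gap_1; unfold bcf_den; cbn; lia |].
  destruct IH as [hq hd]; [lia|]. specialize (b_ge2 (S n) ltac:(lia)).
  rewrite bcf_gap_S. unfold bcf_gap in *. rewrite bcf_den_S.
  assert (0 <= (b (S n) - 2) * bcf_den b (S n)) by (apply Z.mul_nonneg_nonneg; lia). lia.
Qed.

Lemma bcf_gap_mono n j : (1 <= n)%nat -> bcf_gap b n <= bcf_gap b (n + j).
Proof.
  intro hn. induction j as [|j IH]; [rewrite Nat.add_0_r; lia|].
  rewrite Nat.add_succ_r, bcf_gap_S. pose proof (bcf_den_gap_pos (n + j) ltac:(lia)).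
  pose proof (b_ge2 (n + j) ltac:(lia)).
  assert (0 <= (b (n + j) - 2) * bcf_den b (n + j)) by (apply Z.mul_nonneg_nonneg; lia). lia.
Qed.

Lemma bcf_gap_lt_S n : (1 <= n)%nat -> 3 <= b n -> bcf_gap b n < bcf_gap b (S n).
Proof.
  intros hn h3. rewrite bcf_gap_S. pose proof (bcf_den_gap_pos n hn). nia.
Qed.

Lemma bcf_mass_S_le n : (1 <= n)%nat ->
  bcf_mass b (S n) <= Z.max 2 (2 * b n - 3) * bcf_mass b n.
Proof.
  intro hn. pose proof (bcf_den_gap_pos n hn).
  unfold bcf_mass. rewrite bcf_gap_S, bcf_den_S.
  replace (b n * bcf_den b n - bcf_den_prev b n) with ((b n - 1) * bcf_den b n + bcf_gap b n)
    by (unfold bcf_gap; ring).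
  assert (0 <= (Z.max 2 (2 * b n - 3) - (2 * b n - 3)) * bcf_den b n)
    by (apply Z.mul_nonneg_nonneg; lia).
  assert (0 <= (Z.max 2 (2 * b n - 3) - 2) * bcf_gap b n)
    by (apply Z.mul_nonneg_nonneg; lia).
  nia.
Qed.

Lemma bcf_mass_pow_le D n j : (1 <= n)%nat -> (forall i, (i < j)%nat -> b (n + i) <= D) ->
  bcf_mass b (n + j) <= Z.max 2 (2 * D - 3) ^ Z.of_nat j * bcf_mass b n.
Proof.
  intros hn hD. induction j as [|j IH]; [rewrite Nat.add_0_r; lia|].
  rewrite Nat.add_succ_r, Nat2Z.inj_succ, Z.pow_succ_r by lia.
  pose proof (bcf_mass_S_le (n + j) ltac:(lia)).
  pose proof (hD j ltac:(lia)).
  assert (IH' := IH ltac:(intros i hi; apply hD; lia)).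
  assert (0 <= bcf_mass b (n + j)) by (unfold bcf_mass; pose proof (bcf_den_gap_pos (n + j)); lia).
  assert (Z.max 2 (2 * b (n + j) - 3) <= Z.max 2 (2 * D - 3)) by lia.
  assert (0 <= Z.max 2 (2 * D - 3) ^ Z.of_nat j) by (apply Z.pow_nonneg; lia).
  nia.
Qed.

Lemma bcf_mass_run_le n j : (1 <= n)%nat -> (forall i, (i < j)%nat -> b (n + i) = 2) ->
  bcf_mass b (n + j) <= (Z.of_nat j + 1) * bcf_mass b n.
Proof.
  intros hn h2.
  assert (H : bcf_den b (n + j) = bcf_den b n + Z.of_nat j * bcf_gap b n /\
              bcf_gap b (n + j) = bcf_gap b n).
  { induction j as [|j IH]; [rewrite Nat.add_0_r; lia|].
    destruct IH as [e1 e2]; [intros i hi; apply h2; lia|].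
    rewrite Nat.add_succ_r, bcf_gap_S, bcf_den_S, h2 by lia.
    replace (bcf_den_prev b (n + j)) with (bcf_den b (n + j) - bcf_gap b (n + j))
      by (unfold bcf_gap; ring).
    rewrite e1, e2. split; lia. }
  destruct H as [e1 e2]. unfold bcf_mass. rewrite e1, e2.
  pose proof (bcf_den_gap_pos n hn). nia.
Qed.

End DenominatorGrowth.

Open Scope R_scope.

(* [r = 2 - 1/r'] gives [1/(r - 1) = 1 + 1/(r' - 1)]: each 2 of the run adds one. *)
Lemma bcf_rem_after_run x n Nn :
  (forall j, (1 <= j <= Nn)%nat -> bcf_digit (n + j) x = 2%Z) ->
  (3 <= bcf_digit (n + Nn + 1) x)%Z ->
  1 < bcf_rem (S n) x /\ INR Nn < 1 / (bcf_rem (S n) x - 1).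
Proof.
  revert n. induction Nn as [|Nn IH]; intros n h2 h3.
  - rewrite Nat.add_0_r, Nat.add_1_r in h3. apply IZR_le in h3.
    pose proof (bcf_digit_sub_rem x (S n)). cbn [INR].
    split; [lra | apply Rdiv_lt_0_compat; lra].
  - destruct (IH (S n)) as [r1 r2].
    { intros j hj. rewrite Nat.add_succ_comm. apply h2. lia. }
    { rewrite Nat.add_succ_comm. exact h3. }
    pose proof (bcf_rem_eq x (S n)) as he.
    assert (hd : bcf_digit (S n) x = 2%Z) by (rewrite <- Nat.add_1_r; apply h2; lia).
    rewrite hd in he.
    set (r := bcf_rem (S (S n)) x) in *.
    assert (e1 : bcf_rem (S n) x - 1 = (r - 1) / r) by (rewrite he; field; lra).
    assert (0 < bcf_rem (S n) x - 1) by (rewrite e1; apply Rdiv_lt_0_compat; lra).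
    split; [lra|].
    replace (1 / (bcf_rem (S n) x - 1)) with (1 + 1 / (r - 1)) by (rewrite e1; field; lra).
    rewrite S_INR. lra.
Qed.

(* The approximant is the Mobius representation of [bcf_mobius] evaluated at [r_n = 1]. *)
Lemma bcf_approx_error_le x n :
  let b := bcf_digits x in
  (1 <= bcf_den b n)%Z -> (1 <= bcf_gap b n)%Z -> 1 <= bcf_rem n x ->
  Rabs (x - IZR (bcf_num b n - bcf_num_prev b n) / IZR (bcf_gap b n))
    <= (bcf_rem n x - 1) / IZR (bcf_gap b n) ^ 2.
Proof.
  intros b hq hc hr. destruct (bcf_mobius x n) as [hnz hx]. change (bcf_digits x) with b in hnz, hx.
  pose proof (bcf_num_den_det b n) as hdet.
  apply IZR_le in hq. apply IZR_le in hc.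
  unfold bcf_gap in *. rewrite !minus_IZR in *.
  assert (hdetR : IZR (bcf_num b n) * IZR (bcf_den_prev b n)
                  - IZR (bcf_num_prev b n) * IZR (bcf_den b n) = -1)
    by (rewrite <- !mult_IZR, <- minus_IZR, hdet; reflexivity).
  set (r := bcf_rem n x) in *.
  set (q := IZR (bcf_den b n)) in *. set (q' := IZR (bcf_den_prev b n)) in *.
  set (p := IZR (bcf_num b n)) in *. set (p' := IZR (bcf_num_prev b n)) in *.
  assert (hqr : q - q' <= q * r - q') by nra.
  assert (err : x - (p - p') / (q - q') = (r - 1) / ((q - q') * (q * r - q'))).
  { assert (hd : p' * q - p * q' = 1) by lra.
    rewrite hx. field_simplify_eq; [|split; lra].
    transitivity ((r - 1) * (p' * q - p * q')); [ring | rewrite hd; ring]. }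
  rewrite err, Rabs_pos_eq.
  2: { apply Rdiv_le_0_compat; [lra | apply Rmult_lt_0_compat; lra]. }
  unfold Rdiv. apply Rmult_le_compat_l; [lra|].
  apply Rinv_le_contravar; [nra|]. simpl. rewrite Rmult_1_r.
  apply Rmult_le_compat_l; lra.
Qed.

Lemma inv_mul_sqr_le_Rpower c Nn alpha : 1 <= c -> 0 < Nn ->
  (alpha - 2) * ln c <= ln Nn -> / (Nn * c ^ 2) <= Rpower c (- alpha).
Proof.
  intros hc hN hln. unfold Rpower.
  replace (/ (Nn * c ^ 2)) with (exp (- (ln Nn + 2 * ln c))).
  2: { replace (2 * ln c) with (ln c + ln c) by ring.
       rewrite exp_Ropp, !exp_plus, !exp_ln by lra. f_equal. ring. }
  destruct (Rle_lt_or_eq_dec (- (ln Nn + 2 * ln c)) (- alpha * ln c)) as [h|h]; [lra| |].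
  - apply Rlt_le, exp_increasing, h.
  - rewrite h. apply Rle_refl.
Qed.

Lemma good_pair_after_run x n Nn alpha :
  let b := bcf_digits x in
  (forall k, (1 <= k)%nat -> (2 <= bcf_digit k x)%Z) -> (1 <= Nn)%nat ->
  (forall j, (1 <= j <= Nn)%nat -> bcf_digit (n + j) x = 2%Z) ->
  (3 <= bcf_digit (n + Nn + 1) x)%Z ->
  (alpha - 2) * ln (IZR (bcf_gap b (S n))) <= ln (INR Nn) ->
  good_pair x alpha ((bcf_num b (S n) - bcf_num_prev b (S n))%Z, bcf_gap b (S n)).
Proof.
  intros b hb hN h2 h3 hln.
  destruct (bcf_den_gap_pos b hb (S n) ltac:(lia)) as [hq hc].
  destruct (bcf_rem_after_run x n Nn h2 h3) as [hr1 hr2].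
  split; [exact hc|]. split.
  { apply Zgcd_1_rel_prime, bezout_rel_prime.
    apply Bezout_intro with (u := (- bcf_den_prev b (S n))%Z) (v := bcf_num_prev b (S n)).
    pose proof (bcf_num_den_det b (S n)) as hdet. cbn [fst snd].
    replace 1%Z with (- (-1))%Z by reflexivity. rewrite <- hdet. unfold bcf_gap. ring. }
  cbn [fst snd].
  assert (hNR : 1 <= INR Nn) by (apply (le_INR 1); exact hN).
  assert (hcR : 1 <= IZR (bcf_gap b (S n))) by (apply IZR_le; exact hc).
  eapply Rle_lt_trans; [apply bcf_approx_error_le; auto; lra|].
  eapply Rlt_le_trans; [|apply (inv_mul_sqr_le_Rpower _ (INR Nn)); auto; lra].
  assert (hr : bcf_rem (S n) x - 1 < / INR Nn).
  { replace (bcf_rem (S n) x - 1) with (/ (1 / (bcf_rem (S n) x - 1))) by (field; lra).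
    apply Rinv_lt_contravar; [apply Rmult_lt_0_compat|]; lra. }
  change (bcf_digits x) with b. unfold Rdiv.
  rewrite Rinv_mult, (Rmult_comm (bcf_rem _ _ - 1)), (Rmult_comm (/ INR Nn)).
  apply Rmult_lt_compat_l; [apply Rinv_0_lt_compat, pow_lt|]; lra.
Qed.

Lemma approx_exponents_of_unbounded x mu :
  (forall K, exists pq, good_pair x mu pq /\ (K <= snd pq)%Z) -> approx_exponents x mu.
Proof.
  intros h l.
  destruct (h (1 + fold_right (fun pq acc => Z.max (snd pq) acc) 0 l)%Z) as [pq [hg hK]].
  exists pq. split; [exact hg|]. intro hin. clear h hg.
  induction l as [|pq' l IH]; [exact hin|]. cbn [fold_right In] in hK, hin.
  destruct hin as [<-|hin]; [lia | apply IH; [lia | exact hin]].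
Qed.

Lemma G_set_of_approx_exponents alpha x :
  ~ is_rational x -> approx_exponents x alpha -> G_set alpha x.
Proof.
  intros hirr happ. split; [exact hirr|].
  apply (proj1 (Lub_Rbar_correct (approx_exponents x))), happ.
Qed.

Lemma ln_sqrt2_mul x : 0 < x -> ln (sqrt 2 * x) = ln 2 / 2 + ln x.
Proof.
  intro h. assert (hs : 0 < sqrt 2) by (apply sqrt_lt_R0; lra).
  rewrite ln_mult by lra.
  assert (ln 2 = 2 * ln (sqrt 2)).
  { rewrite <- (sqrt_sqrt 2) at 1 by lra. rewrite ln_mult by lra. ring. }
  lra.
Qed.

(* This is [2 F^3 <= 4 (L+1)^4] in logarithmic form. *)
Lemma ln_growth_factor_le F L : 2 <= F <= 2 * L + 1 -> 2 <= L ->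
  ln F + (ln 2 + ln F) / 2 <= ln 2 + 2 * ln (L + 1).
Proof.
  intros hF hL.
  assert (h : ln (2 * F ^ 3) <= ln (4 * (L + 1) ^ 4)).
  { apply ln_le; [assert (0 < F ^ 3) by (apply pow_lt; lra); lra|].
    assert (F ^ 3 <= (2 * L + 1) ^ 3) by (apply pow_incr; lra).
    assert (2 * (2 * L + 1) ^ 3 <= 4 * (L + 1) ^ 4) by (cbn; nra).
    lra. }
  replace 4 with (2 * 2) in h by ring.
  rewrite !ln_mult, !ln_pow in h by (try apply pow_lt; lra).
  cbn [INR] in h. lra.
Qed.

(* Per unit of [Mk], [ln c] grows by at most [2 ln (sqrt 2 (L + 1)) + lam]; the
   budget makes [alpha - 2] times this at most [lam / 2], and [3 ln 2 <= lam Mk]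
   absorbs the additive constants. *)
Lemma exponent_budget c F L lam alpha Mk kk :
  2 <= F <= 2 * L + 1 -> 2 <= L -> 0 < lam -> 2 < alpha ->
  2 * (alpha - 2) * ln (sqrt 2 * (L + 1)) + (alpha - 2) * lam <= lam / 2 ->
  1 <= c -> ln c <= ln 2 + (Mk + kk) * ln F + kk * ln 2 + lam * Mk ->
  0 <= kk -> 2 * kk <= Mk -> 3 * ln 2 <= lam * Mk ->
  (alpha - 2) * ln c <= lam * Mk - ln 2.
Proof.
  intros hF hL hl ha hI hc hlc hk0 hk hM.
  rewrite ln_sqrt2_mul in hI by lra.
  pose proof (ln_growth_factor_le F L hF hL) as hK.
  assert (h2 : 0 < ln 2) by (rewrite <- ln_1; apply ln_increasing; lra).
  assert (hF0 : 0 <= ln F) by (rewrite <- ln_1; apply ln_le; lra).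
  assert (hL1 : 0 <= ln (L + 1)) by (rewrite <- ln_1; apply ln_le; lra).
  set (X := ln 2 + 2 * ln (L + 1)) in *.
  set (A := alpha - 2) in *.
  assert (hcX : ln c <= ln 2 + Mk * (X + lam)).
  { assert (kk * (ln 2 + ln F) <= Mk / 2 * (ln 2 + ln F)) by (apply Rmult_le_compat_r; lra).
    assert (Mk * (ln F + (ln 2 + ln F) / 2) <= Mk * X) by (apply Rmult_le_compat_l; lra).
    lra. }
  assert (hA : A * (X + lam) <= lam / 2) by (unfold X; lra).
  assert (hA2 : A <= 1 / 2).
  { assert (0 <= A * X) by (apply Rmult_le_pos; unfold A, X; lra).
    apply (Rmult_le_reg_r lam); lra. }
  assert (Mk * (A * (X + lam)) <= Mk * (lam / 2)) by (apply Rmult_le_compat_l; lra).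
  assert (A * ln c <= A * (ln 2 + Mk * (X + lam))) by (apply Rmult_le_compat_l; unfold A; lra).
  assert (A * ln 2 <= ln 2 / 2) by nra.
  nra.
Qed.

Fixpoint nprod (k : nat) (f : nat -> nat) : nat :=
  match k with O => 1 | S j => (nprod j f * f j)%nat end.

Lemma nprod_succ_ge1 (N : nat -> nat) k : (1 <= nprod k (fun i => N i + 1))%nat.
Proof. induction k as [|k IH]; cbn; lia. Qed.

Lemma ln_nprod_succ_le (N M : nat -> nat) lam k :
  (forall i, INR (N i) + 1 <= 2 * exp (lam * INR (M i))) ->
  ln (INR (nprod k (fun i => N i + 1)%nat)) <= INR k * ln 2 + lam * INR (nsum k M).
Proof.
  intro hN. induction k as [|k IH]; [cbn; rewrite ln_1; lra|].
  pose proof (nprod_succ_ge1 N k).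
  cbn [nprod nsum]. rewrite mult_INR, ln_mult, S_INR, (plus_INR (nsum k M))
    by (apply lt_0_INR; lia).
  assert (ln (INR (N k + 1)) <= ln 2 + lam * INR (M k)).
  { rewrite <- (ln_exp (lam * INR (M k))), <- ln_mult by (try apply exp_pos; lra).
    apply ln_le; [apply lt_0_INR; lia | rewrite plus_INR; apply hN]. }
  lra.
Qed.

Lemma concat_words_in (s : nat -> Z) (W : list (list Z)) (B : list Z) (p : nat)
  (ws : nat -> list Z) : (0 < p)%nat ->
  (forall w, In w W -> length w = p) -> (forall w, In w W -> forall b, In b w -> In b B) ->
  (forall k, In (ws k) W) ->
  (forall k j, (j < p)%nat -> s (k * p + j + 1)%nat = nth j (ws k) 0%Z) ->
  forall n, (1 <= n)%nat -> In (s n) B.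
Proof.
  intros hp hlen hB hws hs n hn.
  assert (hmod : ((n - 1) mod p < p)%nat) by (apply Nat.mod_upper_bound; lia).
  replace n with ((n - 1) / p * p + (n - 1) mod p + 1)%nat
    by (pose proof (Nat.div_mod_eq (n - 1) p); lia).
  rewrite hs by exact hmod.
  apply (hB _ (hws ((n - 1) / p)%nat)), nth_In. rewrite hlen by apply hws. exact hmod.
Qed.

Lemma Soff_S N k : Soff N (S k) = (Soff N k + (N k + 1))%nat.
Proof. reflexivity. Qed.

Lemma insertion_index_ind (M N : nat -> nat) (P : nat -> Prop) :
  (forall k n, (Mprev M k < n <= M k)%nat -> P (n + Soff N k)%nat) ->
  (forall k j, (1 <= j <= N k)%nat -> P (M k + Soff N k + j)%nat) ->
  (forall k, P (M k + Soff N k + N k + 1)%nat) ->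
  forall k n, (1 <= n <= M k + Soff N (S k))%nat -> P n.
Proof.
  intros Hy H2 Ht k. induction k as [|k IH]; intros n hn.
  - cbn in hn. destruct (le_lt_dec n (M 0%nat)); [|destruct (le_lt_dec n (M 0%nat + N 0%nat))].
    + replace n with (n + Soff N 0)%nat by (cbn; lia). apply Hy. cbn. lia.
    + replace n with (M 0%nat + Soff N 0 + (n - M 0%nat))%nat by (cbn; lia). apply H2. lia.
    + replace n with (M 0%nat + Soff N 0 + N 0%nat + 1)%nat by (cbn; lia). apply Ht.
  - destruct (le_lt_dec n (M k + Soff N (S k))) as [a|a]; [apply IH; lia|].
    rewrite (Soff_S N (S k)) in hn.
    destruct (le_lt_dec n (M (S k) + Soff N (S k))) as [b|b];
      [|destruct (le_lt_dec n (M (S k) + Soff N (S k) + N (S k)))].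
    + replace n with (n - Soff N (S k) + Soff N (S k))%nat by lia.
      apply Hy. change (Mprev M (S k)) with (M k). lia.
    + replace n with (M (S k) + Soff N (S k) + (n - M (S k) - Soff N (S k)))%nat by lia.
      apply H2. lia.
    + replace n with (M (S k) + Soff N (S k) + N (S k) + 1)%nat by lia. apply Ht.
Qed.

Lemma insertion_digits_in (B : list Z) (M N : nat -> nat) (t : Z) (y x : R) :
  (forall k, k <= M k)%nat -> In 2%Z B -> In t B ->
  (forall n, (1 <= n)%nat -> In (bcf_digit n y) B) ->
  is_insertion M N t y x -> forall n, (1 <= n)%nat -> In (bcf_digit n x) B.
Proof.
  intros hM h2 ht hy [hx1 [hx2 hx3]] n hn.
  apply (insertion_index_ind M N (fun n => (1 <= n)%nat -> In (bcf_digit n x) B)) with (k := n);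
    [| | | specialize (hM n); lia | exact hn].
  - intros k n' hk _. rewrite hx1 by exact hk. apply hy. lia.
  - intros k j hj _. rewrite hx2 by exact hj. exact h2.
  - intros k _. rewrite hx3. exact ht.
Qed.

Lemma exists_nat_ge (a : R) (K : Z) : exists k : nat, (K <= Z.of_nat k)%Z /\ a <= INR k.
Proof.
  exists (Z.to_nat (Z.max 0 (Z.max K (up a)))). rewrite INR_IZR_INZ, Z2Nat.id by lia.
  split; [lia|]. destruct (archimed a).
  assert (IZR (up a) <= IZR (Z.max 0 (Z.max K (up a)))) by (apply IZR_le; lia). lra.
Qed.

Section InsertionGrowth.

Variables (x : R) (M N : nat -> nat) (D : Z) (lam alpha L : R).
Hypothesis digit_range : forall n, (1 <= n)%nat -> (2 <= bcf_digit n x <= D)%Z.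
Hypothesis M_ge : forall k, (2 * k <= M k)%nat.
Hypothesis M_dominates : forall k, (nsum k M <= M k)%nat.
Hypothesis run_of_2 : forall k j, (1 <= j <= N k)%nat -> bcf_digit (M k + Soff N k + j) x = 2%Z.
Hypothesis after_run : forall k, (3 <= bcf_digit (M k + Soff N k + N k + 1) x)%Z.
Hypothesis lam_pos : 0 < lam.
Hypothesis N_pos : forall i, (1 <= N i)%nat.
Hypothesis N_le : forall i, INR (N i) + 1 <= 2 * exp (lam * INR (M i)).
Hypothesis ln_N_gt : forall i, lam * INR (M i) - ln 2 < ln (INR (N i)).
Hypothesis L_ge2 : 2 <= L.
Hypothesis growth_factor_le : IZR (Z.max 2 (2 * D - 3)) <= 2 * L + 1.
Hypothesis alpha_gt2 : 2 < alpha.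
Hypothesis budget : 2 * (alpha - 2) * ln (sqrt 2 * (L + 1)) + (alpha - 2) * lam <= lam / 2.

Let b := bcf_digits x.
Let F := Z.max 2 (2 * D - 3).

Let b_ge2 k : (1 <= k)%nat -> (2 <= b k)%Z.
Proof. intro hk. exact (proj1 (digit_range k hk)). Qed.

Let M_mono k : (M k <= M (S k))%nat.
Proof. pose proof (M_dominates (S k)). cbn [nsum] in *. lia. Qed.

Open Scope Z_scope.

Lemma run_start_S k :
  S (M (S k) + Soff N (S k)) = (S (M k + Soff N k) + N k + S (M (S k) - M k))%nat.
Proof. rewrite Soff_S. pose proof (M_mono k). lia. Qed.

Lemma gap_run_start_ge k : Z.of_nat k + 1 <= bcf_gap b (S (M k + Soff N k)).
Proof.
  induction k as [|k IH].
  - pose proof (bcf_gap_mono b b_ge2 1 (M 0%nat + Soff N 0)) as h.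
    rewrite bcf_gap_1 in h. cbn in *. lia.
  - set (i := (M k + Soff N k + N k + 1)%nat).
    pose proof (bcf_gap_mono b b_ge2 (S (M k + Soff N k)) (N k) ltac:(lia)) as h1.
    pose proof (bcf_gap_lt_S b b_ge2 i ltac:(unfold i; lia) (after_run k)) as h2.
    pose proof (bcf_gap_mono b b_ge2 (S i) (M (S k) - M k) ltac:(lia)) as h3.
    rewrite run_start_S.
    replace (S (M k + Soff N k) + N k)%nat with i in h1 by (unfold i; lia).
    replace (S i + (M (S k) - M k))%nat with (S (M k + Soff N k) + N k + S (M (S k) - M k))%nat
      in h3 by (unfold i; lia).
    lia.
Qed.

Lemma mass_run_start_le k :
  bcf_mass b (S (M k + Soff N k)) <=
  2 * F ^ Z.of_nat (M k + k) * Z.of_nat (nprod k (fun i => N i + 1)%nat).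
Proof.
  assert (hF : 2 <= F) by (unfold F; lia).
  assert (hD : forall n j, (1 <= n)%nat -> bcf_mass b (n + j) <= F ^ Z.of_nat j * bcf_mass b n).
  { intros n j hn. apply bcf_mass_pow_le; [exact b_ge2 | exact hn |].
    intros i _. apply (digit_range (n + i)). lia. }
  induction k as [|k IH].
  - specialize (hD 1%nat (M 0%nat) (le_n 1)). rewrite bcf_mass_1 in hD.
    change (1 + M O)%nat with (S (M O)) in hD.
    cbn [Soff nsum nprod]. replace (M O + O)%nat with (M O) by lia. lia.
  - set (s := S (M k + Soff N k)) in *.
    pose proof (bcf_mass_run_le b b_ge2 s (N k) ltac:(unfold s; lia)) as hrun.
    specialize (hrun ltac:(intros i hi; unfold s;
      replace (S (M k + Soff N k) + i)%nat with (M k + Soff N k + S i)%nat by lia;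
      apply run_of_2; lia)).
    specialize (hD (s + N k)%nat (S (M (S k) - M k)) ltac:(lia)).
    rewrite run_start_S. fold s.
    replace (Z.of_nat (M (S k) + S k)) with (Z.of_nat (S (M (S k) - M k)) + Z.of_nat (M k + k))
      by (pose proof (M_mono k); lia).
    cbn [nprod]. rewrite Z.pow_add_r, Nat2Z.inj_mul by lia.
    replace (Z.of_nat (N k + 1)) with (Z.of_nat (N k) + 1) by lia.
    set (G := F ^ Z.of_nat (S (M (S k) - M k))) in *.
    assert (0 <= G) by (apply Z.pow_nonneg; lia).
    eapply Z.le_trans; [exact hD|].
    replace (2 * (G * F ^ Z.of_nat (M k + k)) *
             (Z.of_nat (nprod k (fun i => (N i + 1)%nat)) * (Z.of_nat (N k) + 1)))
      with (G * ((Z.of_nat (N k) + 1) * (2 * F ^ Z.of_nat (M k + k) *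
             Z.of_nat (nprod k (fun i => (N i + 1)%nat))))) by ring.
    apply Z.mul_le_mono_nonneg_l; [assumption|].
    eapply Z.le_trans; [exact hrun|].
    apply Z.mul_le_mono_nonneg_l; [lia | exact IH].
Qed.

Open Scope R_scope.

Lemma ln_gap_run_start_le k :
  ln (IZR (bcf_gap b (S (M k + Soff N k)))) <=
  ln 2 + INR (M k + k) * ln (IZR F) + INR k * ln 2 + lam * INR (M k).
Proof.
  set (P := nprod k (fun i => N i + 1)%nat).
  destruct (bcf_den_gap_pos b b_ge2 (S (M k + Soff N k)) ltac:(lia)) as [hq hc].
  pose proof (mass_run_start_le k) as hm. fold P in hm.
  assert (hF : 2 <= IZR F) by (apply IZR_le; unfold F; lia).
  assert (hP : 1 <= INR P) by (apply (le_INR 1), nprod_succ_ge1).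
  assert (hcm : IZR (bcf_gap b (S (M k + Soff N k))) <= 2 * IZR F ^ (M k + k) * INR P).
  { rewrite pow_IZR, INR_IZR_INZ, <- !mult_IZR. apply IZR_le. unfold bcf_mass in hm. lia. }
  assert (0 < IZR F ^ (M k + k)) by (apply pow_lt; lra).
  eapply Rle_trans; [apply ln_le; [apply IZR_lt; lia | exact hcm]|].
  rewrite !ln_mult, ln_pow by (try apply Rmult_lt_0_compat; lra).
  pose proof (ln_nprod_succ_le N M lam k N_le) as hlnP. fold P in hlnP.
  assert (lam * INR (nsum k M) <= lam * INR (M k))
    by (apply Rmult_le_compat_l, le_INR, M_dominates; lra).
  lra.
Qed.

Lemma alpha_ln_gap_le_ln_run k : 3 * ln 2 <= lam * INR (M k) ->
  (alpha - 2) * ln (IZR (bcf_gap b (S (M k + Soff N k)))) <= ln (INR (N k)).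
Proof.
  intro hk.
  eapply Rle_trans; [|apply Rlt_le, ln_N_gt].
  apply (exponent_budget _ (IZR F) L lam alpha (INR (M k)) (INR k)); auto.
  - split; [apply IZR_le; unfold F; lia | exact growth_factor_le].
  - apply IZR_le. apply (bcf_den_gap_pos b b_ge2). lia.
  - rewrite <- plus_INR. apply ln_gap_run_start_le.
  - apply pos_INR.
  - rewrite <- (mult_INR 2). apply le_INR. specialize (M_ge k). lia.
Qed.

Lemma insertion_approx_exponents : approx_exponents x alpha.
Proof.
  apply approx_exponents_of_unbounded. intro K.
  destruct (exists_nat_ge (3 * ln 2 / lam) K) as [k [hK hk]].
  assert (hMk : 3 * ln 2 <= lam * INR (M k)).
  { apply (Rmult_le_compat_l lam) in hk; [|lra].
    replace (lam * (3 * ln 2 / lam)) with (3 * ln 2) in hk by (field; lra).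
    assert (INR k <= INR (M k)) by (apply le_INR; specialize (M_ge k); lia).
    assert (lam * INR k <= lam * INR (M k)) by (apply Rmult_le_compat_l; lra).
    lra. }
  eexists. split.
  - apply (good_pair_after_run x (M k + Soff N k) (N k) alpha);
      [intros n hn; apply digit_range, hn | apply N_pos | apply run_of_2 | apply after_run |].
    apply alpha_ln_gap_le_ln_run, hMk.
  - apply Z.le_trans with (Z.of_nat k + 1)%Z; [lia | apply gap_run_start_ge].
Qed.

End InsertionGrowth.

Lemma Nins_bounds lambda M k : 0 <= lambda ->
  (1 <= Nins lambda M k)%nat /\
  INR (Nins lambda M k) + 1 <= 2 * exp (lambda * INR (M k)) /\
  exp (lambda * INR (M k)) < 2 * INR (Nins lambda M k).
Proof.
  intro hl. unfold Nins. set (e := exp (lambda * INR (M k))).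
  assert (he : 1 <= e).
  { pose proof (exp_ineq1_le (lambda * INR (M k))).
    assert (0 <= lambda * INR (M k)) by (apply Rmult_le_pos; [lra | apply pos_INR]).
    unfold e; lra. }
  destruct (base_Int_part e) as [b1 b2].
  assert (hz : (0 < Int_part e)%Z) by (apply lt_IZR; lra).
  assert (1 <= IZR (Int_part e)) by (apply IZR_le; lia).
  rewrite INR_IZR_INZ, Z2Nat.id by lia. repeat split; [lia | lra | lra].
Qed.

Lemma ln_Nins_gt lambda M k : 0 <= lambda ->
  lambda * INR (M k) - ln 2 < ln (INR (Nins lambda M k)).
Proof.
  intro hl. destruct (Nins_bounds lambda M k hl) as [h1 [_ h2]].
  assert (1 <= INR (Nins lambda M k)) by (apply (le_INR 1); exact h1).
  assert (h : ln (exp (lambda * INR (M k))) < ln (2 * INR (Nins lambda M k)))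
    by (apply ln_increasing; [apply exp_pos | lra]).
  rewrite ln_exp, ln_mult in h by lra. lra.
Qed.

Lemma IZR_growth_factor_le D r : 1 / 2 <= r ->
  IZR (Z.max 2 (2 * D - 3)) <= 2 * Rmax (IZR (D - 2)) r + 1.
Proof.
  intro hr. pose proof (Rmax_l (IZR (D - 2)) r). pose proof (Rmax_r (IZR (D - 2)) r).
  apply (Z.max_case 2 (2 * D - 3) (fun z => IZR z <= 2 * Rmax (IZR (D - 2)) r + 1)); [lra|].
  rewrite ?minus_IZR, ?mult_IZR in *. lra.
Qed.

Lemma zlist_max_ge B b : In b B -> (b <= zlist_max B)%Z.
Proof.
  unfold zlist_max. induction B as [|a B IH]; cbn [fold_right In]; [tauto|].
  intros [<-|h]; [|specialize (IH h)]; lia.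
Qed.

Lemma Mseq_ge p m k : (forall i, 0 < m i)%nat -> (p * S k <= Mseq p m k)%nat.
Proof.
  intro h. unfold Mseq. apply Nat.mul_le_mono_l.
  induction (S k) as [|j IH]; cbn; [lia|]. specialize (h j). lia.
Qed.

Theorem lemma3p1
  (B : list Z) (t : Z) (p : nat) (W : list (list Z)) (m : nat -> nat)
  (lambda alpha y x : R)
  (HB : forall b, In b B -> (2 <= b)%Z)
  (H2B : In 2%Z B)
  (HtB : In t B) (Ht2 : t <> 2%Z)
  (Hp : (2 <= p)%nat)
  (HWne : W <> nil)
  (HW : forall w, In w W ->
          length w = p /\ (forall b, In b w -> In b B) /\ last w 0%Z <> 2%Z)
  (Hm : forall i, (0 < m i)%nat)
  (HM : forall k, (1 <= k)%nat ->
          (nsum k (Mseq p m) <= Mseq p m k)%nat /\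
          INR (Mseq p m (k - 1)%nat) / 2 <= INR (Mseq p m k))
  (Hlam : 0 < lambda)
  (Halpha : 2 < alpha)
  (Hineq : let L := Rmax (IZR (zlist_max B - 2)) (INR p) in
           2 * (alpha - 2) * ln (sqrt 2 * (L + 1)) + (alpha - 2) * lambda
             <= lambda / 2)
  (Hy01 : 0 < y < 1) (Hyirr : ~ is_rational y)
  (Hyw : exists ws : nat -> list Z, (forall k, In (ws k) W) /\
           forall k j, (j < p)%nat ->
             bcf_digit (k * p + j + 1) y = nth j (ws k) 0%Z)
  (Hx01 : 0 < x < 1) (Hxirr : ~ is_rational x)
  (Hx : is_insertion (Mseq p m) (Nins lambda (Mseq p m)) t y x) :
  G_set alpha x /\ F_set B x.
Proof.
  set (M := Mseq p m) in Hx, HM. set (N := Nins lambda M) in Hx. set (D := zlist_max B).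
  assert (HM2 : forall k, (2 * k <= M k)%nat)
    by (intro k; pose proof (Mseq_ge p m k Hm); unfold M; nia).
  assert (HyB : forall n, (1 <= n)%nat -> In (bcf_digit n y) B).
  { destruct Hyw as [ws [hws hy]].
    apply (concat_words_in (fun n => bcf_digit n y) W B p ws); auto; [lia | |];
      intros w hw; apply (HW w hw). }
  pose proof (insertion_digits_in B M N t y x ltac:(intro k; specialize (HM2 k); lia)
                H2B HtB HyB Hx) as HxB.
  split; [|exact (conj Hx01 (conj Hxirr HxB))].
  apply G_set_of_approx_exponents; [exact Hxirr|].
  destruct Hx as [_ [Hrun Hafter]].
  apply (insertion_approx_exponents x M N D lambda alpha (Rmax (IZR (D - 2)) (INR p))).
  - intros n hn. split; [apply HB | apply zlist_max_ge]; auto.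
  - exact HM2.
  - intros [|k]; [cbn; lia | apply HM; lia].
  - exact Hrun.
  - intro k. rewrite Hafter. pose proof (HB t HtB). lia.
  - exact Hlam.
  - intro i. apply (Nins_bounds lambda M i). lra.
  - intro i. apply (Nins_bounds lambda M i). lra.
  - intro i. apply ln_Nins_gt. lra.
  - apply Rle_trans with (INR p); [apply (le_INR 2), Hp | apply Rmax_r].
  - apply IZR_growth_factor_le, Rle_trans with 2; [lra | apply (le_INR 2), Hp].
  - exact Halpha.
  - exact Hineq.
Qed.
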